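(* Let $\mathbb X,\mathbb Y$ be Euclidean spaces, $g\colon\mathbb X\to\mathbb Y$ continuous, $D\subset\mathbb Y$ closed, $\Phi(x):=g(x)-D$, $(\bar x,0)\in\operatorname{gph}\Phi$, $u\in\mathbb S_{\mathbb X}$, and assume $g$ is calm in direction $u$ at $\bar x$. Let $\mathcal E=\{e_1,\dots,e_m\}$ be an orthonormal basis of $\mathbb Y$. Consider condition (N): there do not exist $v\in\mathbb Y$ and a nonzero $\lambda\in\mathcal N_D(g(\bar x);v)$ with $0\in D^*g(\bar x;(u,v))(\lambda)$ for which there are sequences $x_k\in\mathbb X$ with $x_k\ne\bar x$, $z_k\in D$, $\lambda_k\in\mathbb Y$, $\eta_k\in\mathbb X$ satisfying $x_k\to\bar x$, $z_k\to g(\bar x)$, $\lambda_k\to\lambda$, $\eta_k\to0$, $\frac{x_k-\bar x}{\|x_k-\bar x\|}\to u$, $\frac{z_k-g(\bar x)}{\|x_k-\bar x\|}\to v$, $\frac{g(x_k)-g(\bar x)}{\|x_k-\bar x\|}\to v$, and for all $k$ and $i$: $\eta_k\in\widehat D^*g(x_k)(\lambda_k)$, $\lambda_k\in\widehat{\mathcal N}_D(z_k)$, and $\langle\lambda,e_i\rangle\langle g(x_k)-z_k,e_i\rangle>0$ whenever $\langle\lambda,e_i\rangle\ne0$. If (N) holds, then $\Phi$ is quasi-normal in direction $u$ at $(\bar x,0)$ w.r.t. $\mathcal E$. Moreover, if $g$ is calm at every point near $\bar x$, then (N) is equivalent to quasi-normality of $\Phi$ in direction $u$ at $(\bar x,0)$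 w.r.t. $\mathcal E$.
   Context: $g$ is calm at $x$ in direction $u$ if there are $\varepsilon,\delta,L>0$ with $\|g(x')-g(x)\|\le L\|x'-x\|$ for all $x'\in x+\mathbb B_{\varepsilon,\delta}(u)$, where $\mathbb B_{\varepsilon,\delta}(u)=\{w\mid\|\|w\|u-\|u\|w\|\le\delta\|u\|\|w\|,\ \|w\|\le\varepsilon\}$; calm at $x$ means this with $u=0$. $\widehat{\mathcal N}$ is the regular normal cone, $\mathcal N_Q(z;w)$ the directional limiting normal cone (all $\eta$ with $w_k\to w$, $t_k\downarrow0$, $\eta_k\to\eta$, $\eta_k\in\widehat{\mathcal N}_Q(z+t_kw_k)$). For single-valued $g$: $\widehat D^*g(x)(\lambda)=\{x^*\mid(x^*,-\lambda)\in\widehat{\mathcal N}_{\operatorname{gph}g}(x,g(x))\}$ and $D^*g(\bar x;(u,v))(\lambda)=\{x^*\mid(x^*,-\lambda)\in\mathcal N_{\operatorname{gph}g}((\bar x,g(\bar x));(u,v))\}$; for set-valued $\Phi$, $\widehat D^*\Phi$ and $D^*\Phi((\bar x,\bar y);(u,v))$ are defined analogously with $\operatorname{gph}\Phi$. Quasi-normality in direction $u$ at $(\bar x,0)$ w.r.t. $\mathcal E$: there is no nonzero $\lambda$ with $0\in D^*\Phi((\bar x,0);(u,0))(\lambda)$ for which there exist $(x_k,y_k)\in\operatorname{gph}\Phi$ with $x_k\ne\bar x$, $\lambda_k$, $\eta_k$ with $x_k\to\bar x$, $y_k\to0$, $\lambda_k\to\lambda$, $\eta_k\to0$, $\frac{x_k-\bar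 x}{\|x_k-\bar x\|}\to u$, $\frac{y_k}{\|x_k-\bar x\|}\to0$, and for all $k,i$: $\eta_k\in\widehat D^*\Phi(x_k,y_k)(\lambda_k)$ and $\langle\lambda,e_i\rangle\langle y_k,e_i\rangle>0$ whenever $\langle\lambda,e_i\rangle\ne0$. *)

From HB Require Import structures.
From mathcomp Require Import all_boot all_order all_algebra.
From mathcomp Require Import reals.
Set Implicit Arguments. Unset Strict Implicit. Unset Printing Implicit Defensive.
Import Order.TTheory GRing.Theory Num.Theory.
Local Open Scope ring_scope.

Section Defs.
Variable R : realType.

Definition dotv n (a b : 'rV[R]_n) : R := \sum_(i < n) a ord0 i * b ord0 i.
Definition enorm n (a : 'rV[R]_n) : R := Num.sqrt (dotv a a).

Definition dotp n m (a b : 'rV[R]_n * 'rV[R]_m) : R := dotv a.1 b.1 + dotv a.2 b.2.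
Definition enormp n m (a : 'rV[R]_n * 'rV[R]_m) : R := Num.sqrt (dotp a a).

Definition cvgR (s : nat -> R) (l : R) : Prop :=
  forall eps : R, 0 < eps -> exists N : nat, forall k : nat, (N <= k)%N -> `|s k - l| < eps.
Definition cvgv n (s : nat -> 'rV[R]_n) (l : 'rV[R]_n) : Prop :=
  forall eps : R, 0 < eps -> exists N : nat, forall k : nat, (N <= k)%N -> enorm (s k - l) < eps.
Definition cvgp n m (s : nat -> 'rV[R]_n * 'rV[R]_m) (l : 'rV[R]_n * 'rV[R]_m) : Prop :=
  forall eps : R, 0 < eps -> exists N : nat, forall k : nat, (N <= k)%N ->
    enormp (((s k).1 - l.1), ((s k).2 - l.2)) < eps.

Definition econt n m (g : 'rV[R]_n -> 'rV[R]_m) : Prop :=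
  forall x eps, 0 < eps -> exists delta, 0 < delta /\
    forall x', enorm (x' - x) < delta -> enorm (g x' - g x) < eps.
Definition eclosed m (D : 'rV[R]_m -> Prop) : Prop :=
  forall (s : nat -> 'rV[R]_m) l, (forall k, D (s k)) -> cvgv s l -> D l.

(* regular (Fréchet) normal cone; empty outside the set *)
Definition rnormal n (Q : 'rV[R]_n -> Prop) (z eta : 'rV[R]_n) : Prop :=
  Q z /\ forall eps, 0 < eps -> exists delta, 0 < delta /\
    forall z', Q z' -> enorm (z' - z) < delta -> dotv eta (z' - z) <= eps * enorm (z' - z).
Definition rnormalp n m (Q : 'rV[R]_n * 'rV[R]_m -> Prop)
    (z eta : 'rV[R]_n * 'rV[R]_m) : Prop :=
  Q z /\ forall eps, 0 < eps -> exists delta, 0 < delta /\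
    forall z', Q z' -> enormp (z'.1 - z.1, z'.2 - z.2) < delta ->
      dotp eta (z'.1 - z.1, z'.2 - z.2) <= eps * enormp (z'.1 - z.1, z'.2 - z.2).

Definition dnormal n (Q : 'rV[R]_n -> Prop) (z w eta : 'rV[R]_n) : Prop :=
  exists (wk : nat -> 'rV[R]_n) (tk : nat -> R) (etak : nat -> 'rV[R]_n),
    cvgv wk w /\ (forall k, 0 < tk k) /\ cvgR tk 0 /\ cvgv etak eta /\
    forall k, rnormal Q (z + tk k *: wk k) (etak k).
Definition dnormalp n m (Q : 'rV[R]_n * 'rV[R]_m -> Prop)
    (z w eta : 'rV[R]_n * 'rV[R]_m) : Prop :=
  exists (wk : nat -> 'rV[R]_n * 'rV[R]_m) (tk : nat -> R)
         (etak : nat -> 'rV[R]_n * 'rV[R]_m),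
    cvgp wk w /\ (forall k, 0 < tk k) /\ cvgR tk 0 /\ cvgp etak eta /\
    forall k, rnormalp Q (z.1 + tk k *: (wk k).1, z.2 + tk k *: (wk k).2) (etak k).

Definition gphf n m (g : 'rV[R]_n -> 'rV[R]_m) : 'rV[R]_n * 'rV[R]_m -> Prop :=
  fun p => p.2 = g p.1.
(* Phi(x) = g(x) - D *)
Definition gphPhi n m (g : 'rV[R]_n -> 'rV[R]_m) (D : 'rV[R]_m -> Prop)
  : 'rV[R]_n * 'rV[R]_m -> Prop := fun p => D (g p.1 - p.2).

Definition rcoderf n m (g : 'rV[R]_n -> 'rV[R]_m) (x : 'rV[R]_n) (lam : 'rV[R]_m)
    (xs : 'rV[R]_n) : Prop :=
  rnormalp (gphf g) (x, g x) (xs, - lam).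
Definition dcoderf n m (g : 'rV[R]_n -> 'rV[R]_m) (xb u : 'rV[R]_n) (v lam : 'rV[R]_m)
    (xs : 'rV[R]_n) : Prop :=
  dnormalp (gphf g) (xb, g xb) (u, v) (xs, - lam).
Definition rcoderS n m (G : 'rV[R]_n * 'rV[R]_m -> Prop) (x : 'rV[R]_n) (y lam : 'rV[R]_m)
    (xs : 'rV[R]_n) : Prop :=
  rnormalp G (x, y) (xs, - lam).
Definition dcoderS n m (G : 'rV[R]_n * 'rV[R]_m -> Prop) (xb : 'rV[R]_n) (yb : 'rV[R]_m)
    (u : 'rV[R]_n) (v lam : 'rV[R]_m) (xs : 'rV[R]_n) : Prop :=
  dnormalp G (xb, yb) (u, v) (xs, - lam).

Definition dirball n (eps delta : R) (u w : 'rV[R]_n) : Prop :=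
  enorm (enorm w *: u - enorm u *: w) <= delta * enorm u * enorm w /\ enorm w <= eps.
Definition calm_dir n m (g : 'rV[R]_n -> 'rV[R]_m) (x u : 'rV[R]_n) : Prop :=
  exists eps delta L, 0 < eps /\ 0 < delta /\ 0 < L /\
    forall x', dirball eps delta u (x' - x) -> enorm (g x' - g x) <= L * enorm (x' - x).
Definition calm_at n m (g : 'rV[R]_n -> 'rV[R]_m) (x : 'rV[R]_n) : Prop :=
  calm_dir g x 0.

Definition orthonormal_basis m (e : 'I_m -> 'rV[R]_m) : Prop :=
  forall i j, dotv (e i) (e j) = (i == j)%:R.

Definition quasi_normal_dir n m (G : 'rV[R]_n * 'rV[R]_m -> Prop) (xb u : 'rV[R]_n)
    (e : 'I_m -> 'rV[R]_m) : Prop :=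
  ~ exists lam : 'rV[R]_m, lam != 0 /\ dcoderS G xb 0 u 0 lam 0 /\
    exists (xk : nat -> 'rV[R]_n) (yk : nat -> 'rV[R]_m)
           (lamk : nat -> 'rV[R]_m) (etak : nat -> 'rV[R]_n),
      (forall k, G (xk k, yk k)) /\ (forall k, xk k != xb) /\
      cvgv xk xb /\ cvgv yk 0 /\ cvgv lamk lam /\ cvgv etak 0 /\
      cvgv (fun k => (enorm (xk k - xb))^-1 *: (xk k - xb)) u /\
      cvgv (fun k => (enorm (xk k - xb))^-1 *: yk k) 0 /\
      forall k, rcoderS G (xk k) (yk k) (lamk k) (etak k) /\
        forall i, dotv lam (e i) != 0 -> 0 < dotv lam (e i) * dotv (yk k) (e i).

Definition condN n m (g : 'rV[R]_n -> 'rV[R]_m) (D : 'rV[R]_m -> Prop) (xb u : 'rV[R]_n)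
    (e : 'I_m -> 'rV[R]_m) : Prop :=
  ~ exists (v lam : 'rV[R]_m), lam != 0 /\ dnormal D (g xb) v lam /\ dcoderf g xb u v lam 0 /\
    exists (xk : nat -> 'rV[R]_n) (zk : nat -> 'rV[R]_m)
           (lamk : nat -> 'rV[R]_m) (etak : nat -> 'rV[R]_n),
      (forall k, xk k != xb) /\ (forall k, D (zk k)) /\
      cvgv xk xb /\ cvgv zk (g xb) /\ cvgv lamk lam /\ cvgv etak 0 /\
      cvgv (fun k => (enorm (xk k - xb))^-1 *: (xk k - xb)) u /\
      cvgv (fun k => (enorm (xk k - xb))^-1 *: (zk k - g xb)) v /\
      cvgv (fun k => (enorm (xk k - xb))^-1 *: (g (xk k) - g xb)) v /\
      forall k, rcoderf g (xk k) (lamk k) (etak k) /\ rnormal D (zk k) (lamk k) /\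
        forall i, dotv lam (e i) != 0 -> 0 < dotv lam (e i) * dotv (g (xk k) - zk k) (e i).

End Defs.

From HB Require Import structures.
From mathcomp Require Import all_boot all_order all_algebra.
From mathcomp Require Import reals.
From mathcomp Require Import topology normedtype sequences.
From mathcomp Require Import ring lra.
Import Order.TTheory GRing.Theory Num.Theory.
Import numFieldNormedType.Exports.
Set Implicit Arguments. Unset Strict Implicit. Unset Printing Implicit Defensive.
Local Open Scope ring_scope.

(* A point (x, y) of gph Phi corresponds to the point z = g x - y of D, and a
   regular normal (eta, -lam) to gph Phi at (x, y) splits into a regular normal
   lam to D at z and a regular coderivative eta of g at x for lam; conversely
   the two recombine when g is calm at x.  Through y_k = g x_k - z_k, sequences
   witnessing a failure of quasi-normality become sequences witnessing a
   failure of (N), and vice versa.  The one datum of (N) without counterpart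
   is the direction v: calmness of g in direction u keeps the quotients
   (g x_k - g xb) / |x_k - xb| bounded, so v is found as a cluster point of
   them (Bolzano-Weierstrass). *)

Section InnerProduct.
Variables (R : realType) (n : nat).
Implicit Types a b c : 'rV[R]_n.

Lemma dotvC a b : dotv a b = dotv b a.
Proof. by apply: eq_bigr => i _; rewrite mulrC. Qed.

Lemma dotvDl a b c : dotv (a + b) c = dotv a c + dotv b c.
Proof. by rewrite /dotv -big_split; apply: eq_bigr => i _; rewrite mxE mulrDl. Qed.

Lemma dotvZl (k : R) a b : dotv (k *: a) b = k * dotv a b.
Proof. by rewrite /dotv mulr_sumr; apply: eq_bigr => i _; rewrite mxE mulrA. Qed.

Lemma dotvNl a b : dotv (- a) b = - dotv a b.
Proof. by rewrite -scaleN1r dotvZl mulN1r. Qed.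

Lemma dotvDr a b c : dotv a (b + c) = dotv a b + dotv a c.
Proof. by rewrite dotvC dotvDl !(dotvC a). Qed.

Lemma dotvZr (k : R) a b : dotv a (k *: b) = k * dotv a b.
Proof. by rewrite dotvC dotvZl dotvC. Qed.

Lemma dotvNr a b : dotv a (- b) = - dotv a b.
Proof. by rewrite dotvC dotvNl dotvC. Qed.

Lemma dotvBr a b c : dotv a (b - c) = dotv a b - dotv a c.
Proof. by rewrite dotvDr dotvNr. Qed.

Lemma dotv0r a : dotv a 0 = 0.
Proof. by rewrite /dotv big1 // => i _; rewrite mxE mulr0. Qed.

Lemma dotv_ge0 a : 0 <= dotv a a.
Proof. by apply: sumr_ge0 => i _; rewrite -expr2 sqr_ge0. Qed.

Lemma sqr_coord_le_dotv a i : a ord0 i ^+ 2 <= dotv a a.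
Proof.
rewrite /dotv (bigD1 i) //= expr2 lerDl.
by apply: sumr_ge0 => j _; rewrite -expr2 sqr_ge0.
Qed.

Lemma dotv_le_coord a (d : R) :
  (forall i, `|a ord0 i| <= d) -> dotv a a <= n%:R * d ^+ 2.
Proof.
move=> ad; rewrite mulr_natl -[n in _ *+ n]card_ord -sumr_const.
apply: ler_sum => i _; rewrite -expr2 -real_normK ?num_real //.
by rewrite ler_sqr ?nnegrE ?(le_trans _ (ad i)).
Qed.

Lemma enorm_ge0 a : 0 <= enorm a.
Proof. exact: sqrtr_ge0. Qed.

Lemma sqr_enorm a : enorm a ^+ 2 = dotv a a.
Proof. by rewrite sqr_sqrtr ?dotv_ge0. Qed.

Lemma enorm0 : enorm (0 : 'rV[R]_n) = 0.
Proof. by rewrite /enorm dotv0r sqrtr0. Qed.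

Lemma enorm_le a (c : R) : 0 <= c -> dotv a a <= c ^+ 2 -> enorm a <= c.
Proof. by move=> c0 ac; rewrite /enorm -(ger0_norm c0) -sqrtr_sqr ler_sqrt ?sqr_ge0. Qed.

Lemma enorm_lt a (c : R) : 0 < c -> dotv a a < c ^+ 2 -> enorm a < c.
Proof. by move=> c0 ac; rewrite /enorm -(gtr0_norm c0) -sqrtr_sqr ltr_sqrt ?exprn_gt0. Qed.

Lemma enorm_gt0 a : a != 0 -> 0 < enorm a.
Proof.
move=> a0; rewrite lt_def enorm_ge0 andbT; apply: contra a0 => /eqP a0.
apply/eqP/rowP => i; rewrite mxE; apply/eqP.
by rewrite -sqrf_eq0 eq_le sqr_ge0 andbT (le_trans (sqr_coord_le_dotv a i)) // -sqr_enorm a0 expr0n.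
Qed.

Lemma enormZ (k : R) a : enorm (k *: a) = `|k| * enorm a.
Proof. by rewrite /enorm dotvZl dotvZr mulrA -expr2 sqrtrM ?sqr_ge0 // sqrtr_sqr. Qed.

Lemma enormN a : enorm (- a) = enorm a.
Proof. by rewrite -scaleN1r enormZ normrN normr1 mul1r. Qed.

Lemma enorm_distC a b : enorm (a - b) = enorm (b - a).
Proof. by rewrite -enormN opprB. Qed.

Lemma cauchy_schwarz a b : dotv a b ^+ 2 <= dotv a a * dotv b b.
Proof.
have [b0|bpos] := eqVneq b 0; first by rewrite b0 !dotv0r mulr0 expr0n.
have bb : 0 < dotv b b by rewrite -sqr_enorm exprn_gt0 ?enorm_gt0.
have := dotv_ge0 (dotv b b *: a - dotv a b *: b).
rewrite !(dotvDl, dotvDr, dotvNl, dotvNr, dotvZl, dotvZr) (dotvC b a).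
nra.
Qed.

Lemma dotv_le_enorm a b : dotv a b <= enorm a * enorm b.
Proof.
apply: le_trans (ler_norm _) _.
rewrite -ler_sqr ?nnegrE ?mulr_ge0 ?enorm_ge0 //.
by rewrite real_normK ?num_real // exprMn !sqr_enorm cauchy_schwarz.
Qed.

Lemma enormD a b : enorm (a + b) <= enorm a + enorm b.
Proof.
apply: enorm_le; first by rewrite addr_ge0 ?enorm_ge0.
rewrite dotvDl !dotvDr (dotvC b a) sqrrD -!sqr_enorm.
have := dotv_le_enorm a b; lra.
Qed.

Lemma coord_le_enorm a i : `|a ord0 i| <= enorm a.
Proof.
rewrite -ler_sqr ?nnegrE ?enorm_ge0 //.
by rewrite sqr_enorm real_normK ?num_real // sqr_coord_le_dotv.
Qed.

End InnerProduct.

Section ProductNorm.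
Variables (R : realType) (n m : nat).
Implicit Types (a : 'rV[R]_n) (b : 'rV[R]_m).

Lemma sqr_enormp a b : enormp (a, b) ^+ 2 = enorm a ^+ 2 + enorm b ^+ 2.
Proof. by rewrite sqr_sqrtr ?sqr_enorm // addr_ge0 ?dotv_ge0. Qed.

Lemma enormp_ge0 a b : 0 <= enormp (a, b).
Proof. exact: sqrtr_ge0. Qed.

Lemma le_enormp_l a b : enorm a <= enormp (a, b).
Proof. by rewrite -ler_sqr ?nnegrE ?enorm_ge0 ?enormp_ge0 // sqr_enormp lerDl sqr_ge0. Qed.

Lemma le_enormp_r a b : enorm b <= enormp (a, b).
Proof. by rewrite -ler_sqr ?nnegrE ?enorm_ge0 ?enormp_ge0 // sqr_enormp lerDr sqr_ge0. Qed.

Lemma enormp_le_add a b : enormp (a, b) <= enorm a + enorm b.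
Proof.
rewrite -ler_sqr ?nnegrE ?addr_ge0 ?enorm_ge0 ?enormp_ge0 // sqr_enormp.
have := enorm_ge0 a; have := enorm_ge0 b; nra.
Qed.

End ProductNorm.

Section Convergence.
Variable R : realType.

Lemma cvgv_sub n (s : nat -> 'rV[R]_n) l (p : nat -> nat) :
  (forall k, (k <= p k)%N) -> cvgv s l -> cvgv (fun k => s (p k)) l.
Proof.
move=> hp cs eps e0; have [N HN] := cs eps e0; exists N => k Nk.
exact/HN/(leq_trans Nk).
Qed.

Lemma cvgR_sub (s : nat -> R) l (p : nat -> nat) :
  (forall k, (k <= p k)%N) -> cvgR s l -> cvgR (fun k => s (p k)) l.
Proof.
move=> hp cs eps e0; have [N HN] := cs eps e0; exists N => k Nk.
exact/HN/(leq_trans Nk).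
Qed.

Lemma eq_cvgv n (s s' : nat -> 'rV[R]_n) l :
  s =1 s' -> cvgv s l -> cvgv s' l.
Proof. by move=> e cs eps /cs [N HN]; exists N => k; rewrite -e; apply: HN. Qed.

Lemma cvgvN n (s : nat -> 'rV[R]_n) l :
  cvgv s l -> cvgv (fun k => - s k) (- l).
Proof. by move=> cs eps /cs [N HN]; exists N => k; rewrite -opprD enormN; apply: HN. Qed.

Lemma cvgvD n (s s' : nat -> 'rV[R]_n) l l' :
  cvgv s l -> cvgv s' l' -> cvgv (fun k => s k + s' k) (l + l').
Proof.
move=> cs cs' eps e0.
have [N HN] := cs _ (divr_gt0 e0 (ltr0n _ 2)).
have [N' HN'] := cs' _ (divr_gt0 e0 (ltr0n _ 2)).
exists (maxn N N') => k; rewrite geq_max => /andP [kN kN'].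
rewrite opprD addrACA; apply: le_lt_trans (enormD _ _) _.
have := HN k kN; have := HN' k kN'; lra.
Qed.

Lemma cvgvB n (s s' : nat -> 'rV[R]_n) l l' :
  cvgv s l -> cvgv s' l' -> cvgv (fun k => s k - s' k) (l - l').
Proof. by move=> cs /cvgvN; apply: cvgvD. Qed.

Lemma cvgv_dist n (s : nat -> 'rV[R]_n) l :
  cvgv s l -> cvgR (fun k => enorm (s k - l)) 0.
Proof.
by move=> cs eps /cs [N HN]; exists N => k /HN; rewrite subr0 ger0_norm ?enorm_ge0.
Qed.

Lemma econt_cvgv n m (g : 'rV[R]_n -> 'rV[R]_m) (s : nat -> 'rV[R]_n) l :
  econt g -> cvgv s l -> cvgv (fun k => g (s k)) (g l).
Proof.
move=> cg cs eps /(cg l) [d [d0 hd]].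
by have [N HN] := cs d d0; exists N => k /HN /hd.
Qed.

Lemma cvgp_pair n m (a : nat -> 'rV[R]_n) (b : nat -> 'rV[R]_m) A B :
  cvgv a A -> cvgv b B -> cvgp (fun k => (a k, b k)) (A, B).
Proof.
move=> ca cb eps e0.
have [N HN] := ca _ (divr_gt0 e0 (ltr0n _ 2)).
have [N' HN'] := cb _ (divr_gt0 e0 (ltr0n _ 2)).
exists (maxn N N') => k; rewrite geq_max => /andP [kN kN'] /=.
apply: le_lt_trans (enormp_le_add _ _) _.
have := HN k kN; have := HN' k kN'; lra.
Qed.

Lemma cvgv_coord n (s : nat -> 'rV[R]_n) (l : 'rV[R]_n) :
  (forall i, cvgR (fun k => s k ord0 i) (l ord0 i)) -> cvgv s l.
Proof.
move=> cs eps e0.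
pose d := eps / (n%:R + 1).
have n1 : 0 < n%:R + 1 :> R by rewrite ltr_wpDl.
have d0 : 0 < d by rewrite divr_gt0.
have [N HN] : exists N : 'I_n -> nat,
    forall i k, (N i <= k)%N -> `|s k ord0 i - l ord0 i| < d.
  exact: (fin_all_exists (fun i => cs i d d0)).
exists (\max_i N i) => k kN; apply: enorm_lt => //.
apply: le_lt_trans (dotv_le_coord (d := d) _) _.
  move=> i; rewrite !mxE; apply/ltW/HN/(leq_trans _ kN).
  exact: leq_bigmax.
have -> : eps = d * (n%:R + 1) by rewrite divfK ?gt_eqF.
have : 0 <= n%:R :> R by []. nra.
Qed.

Lemma bounded_cvgR_sub (c : nat -> R) (M : R) : (forall k, `|c k| <= M) ->
  exists p : nat -> nat, (forall k, (k <= p k)%N) /\ exists l, cvgR (fun k => c (p k)) l.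
Proof.
move=> cM.
have bc : bounded_fun c.
  exists M; split; first exact: num_real.
  by move=> X MX k _ /=; apply: le_trans (cM k) (ltW MX).
have [p p_incr /cvg_ex [l /cvgrPdist_lt pl]] := bolzano_weierstrass bc.
exists p; split.
  elim=> [|k IH] //; apply: leq_ltn_trans IH _.
  by have := p_incr k.+1 k; rewrite leEnat ltnn ltnNge => ->.
exists l => eps /pl [N _ HN]; exists N => k Nk.
by rewrite distrC; apply: HN.
Qed.

Lemma bounded_cvgv_sub m (q : nat -> 'rV[R]_m) (M : R) : (forall k, enorm (q k) <= M) ->
  exists p : nat -> nat, (forall k, (k <= p k)%N) /\ exists v, cvgv (fun k => q (p k)) v.
Proof.
move=> qM.
have coords (s : seq 'I_m) : exists p : nat -> nat, (forall k, (k <= p k)%N) /\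
    forall i, i \in s -> exists l, cvgR (fun k => q (p k) ord0 i) l.
  elim: s => [|i s [p [hp IH]]]; first by exists id.
  have [p' [hp' [l hl]]] := @bounded_cvgR_sub (fun k => q (p k) ord0 i) M
     (fun k => le_trans (coord_le_enorm _ _) (qM _)).
  exists (fun k => p (p' k)); split; first by move=> k; apply: leq_trans (hp' k) (hp _).
  move=> j; rewrite in_cons => /predU1P [-> | js]; first by exists l.
  by have [l' hl'] := IH j js; exists l'; apply: cvgR_sub hl'.
have [p [hp cvg_coords]] := coords (enum 'I_m).
have [l hl] : exists l : 'I_m -> R, forall i, cvgR (fun k => q (p k) ord0 i) (l i).
  apply: (@fin_all_exists _ (fun=> R) (fun i l => cvgR (fun k => q (p k) ord0 i) l)).
  by move=> i; apply: cvg_coords; rewrite mem_enum.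
exists p; split => //; exists (\row_i l i); apply: cvgv_coord => i.
by rewrite mxE; apply: hl.
Qed.

End Convergence.

Section DirectionalNormals.
Variable R : realType.

Lemma dnormal_seq n (Q : 'rV[R]_n -> Prop) z w lam
    (zk : nat -> 'rV[R]_n) (tk : nat -> R) (lamk : nat -> 'rV[R]_n) :
  (forall k, 0 < tk k) -> cvgR tk 0 ->
  cvgv (fun k => (tk k)^-1 *: (zk k - z)) w -> cvgv lamk lam ->
  (forall k, rnormal Q (zk k) (lamk k)) -> dnormal Q z w lam.
Proof.
move=> tk0 ctk cw clam nQ.
exists (fun k => (tk k)^-1 *: (zk k - z)), tk, lamk; do 4!split => //.
by move=> k; rewrite scalerKV ?subrKC ?gt_eqF ?tk0 //; apply: nQ.
Qed.

Lemma dcoderS_seq n m (G : 'rV[R]_n * 'rV[R]_m -> Prop) xb yb u v lam xs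
    (xk : nat -> 'rV[R]_n) (yk lamk : nat -> 'rV[R]_m) (xsk : nat -> 'rV[R]_n)
    (tk : nat -> R) :
  (forall k, 0 < tk k) -> cvgR tk 0 ->
  cvgv (fun k => (tk k)^-1 *: (xk k - xb)) u ->
  cvgv (fun k => (tk k)^-1 *: (yk k - yb)) v ->
  cvgv lamk lam -> cvgv xsk xs ->
  (forall k, rcoderS G (xk k) (yk k) (lamk k) (xsk k)) -> dcoderS G xb yb u v lam xs.
Proof.
move=> tk0 ctk cu cv clam cxs nG.
exists (fun k => ((tk k)^-1 *: (xk k - xb), (tk k)^-1 *: (yk k - yb))), tk,
  (fun k => (xsk k, - lamk k)).
split; first exact: cvgp_pair.
do 3!split => //; first exact/cvgp_pair/cvgvN.
by move=> k /=; rewrite !scalerKV ?subrKC ?gt_eqF ?tk0 //; apply: nG.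
Qed.

End DirectionalNormals.

Section CoderivativePhi.
Variables (R : realType) (n m : nat).
Variables (g : 'rV[R]_n -> 'rV[R]_m) (D : 'rV[R]_m -> Prop).
Implicit Types (x : 'rV[R]_n) (y lam : 'rV[R]_m) (eta : 'rV[R]_n).

Lemma rcoderS_gphPhi_rnormal x y lam eta :
  rcoderS (gphPhi g D) x y lam eta -> rnormal D (g x - y) lam.
Proof.
move=> [Dz nPhi]; split => // eps /nPhi [d [d0 hd]]; exists d; split => // z' Dz' z'd.
have ez' : g x - z' - y = - (z' - (g x - y)) by rewrite opprB addrAC.
have normE : enormp (x - x, - (z' - (g x - y))) = enorm (z' - (g x - y)).
  by rewrite subrr /enormp /dotp dotv0r add0r dotvNl dotvNr opprK.
have := hd (x, g x - z'); rewrite /= ez' normE /dotp subrr dotv0r add0r.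
by rewrite dotvNl dotvNr opprK; apply; rewrite // /gphPhi /= subKr.
Qed.

Lemma rcoderS_gphPhi_rcoderf x y lam eta :
  rcoderS (gphPhi g D) x y lam eta -> rcoderf g x lam eta.
Proof.
move=> [Dxy nPhi]; split => // eps /nPhi [d [d0 hd]]; exists d; split => //.
move=> [x' y']; rewrite /gphf /= => -> x'd.
have Dz' : gphPhi g D (x', g x' - (g x - y)) by rewrite /gphPhi /= subKr.
by have := hd _ Dz'; rewrite /= opprB addrA addrAC addrK; apply.
Qed.

Lemma calm_at_lipschitz x : calm_at g x -> exists r L, [/\ 0 < r, 0 <= L &
  forall x', enorm (x' - x) <= r -> enorm (g x' - g x) <= L * enorm (x' - x)].
Proof.
move=> [r [d [L [r0 [_ [L0 hL]]]]]]; exists r, L; split => // [|x' x'r].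
  exact: ltW.
apply: hL; split => //.
by rewrite scaler0 enorm0 scale0r subr0 enorm0 mulr0 !mul0r.
Qed.

Lemma dotp_gphPhi x x' y y' lam eta :
  dotp (eta, - lam) (x' - x, y' - y) =
  dotp (eta, - lam) (x' - x, g x' - g x) + dotv lam ((g x' - y') - (g x - y)).
Proof. by rewrite /dotp /= !dotvNl !dotvBr; ring. Qed.

Lemma rcoderS_gphPhi_of_calm x y lam eta : calm_at g x ->
  rcoderf g x lam eta -> rnormal D (g x - y) lam -> rcoderS (gphPhi g D) x y lam eta.
Proof.
move=> /calm_at_lipschitz [r [L [r0 L0 lipg]]] [_ ng] [Dz nD].
split => // eps eps0.
(* Both terms of [dotp_gphPhi] are at most e (1 + L) |(x' - x, y' - y)|. *)
pose e := eps / (2 * (1 + L)).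
have e0 : 0 < e by rewrite divr_gt0 // pmulr_rgt0 // ltr_wpDr.
have [d1 [d10 hd1]] := ng e e0; have [d2 [d20 hd2]] := nD e e0.
exists (Num.min r (Num.min d1 d2 / (1 + L))); split.
  by rewrite lt_min r0 divr_gt0 ?ltr_wpDr // lt_min d10 d20.
move=> [x' y'] /= Dz'; rewrite !lt_min ltr_pdivlMr ?ltr_wpDr // lt_min.
set P := enormp (x' - x, y' - y) => /andP [Pr /andP [Pd1 Pd2]].
have dxP : enorm (x' - x) <= P := le_enormp_l _ _.
have dyP : enorm (y' - y) <= P := le_enormp_r _ _.
have dgL : enorm (g x' - g x) <= L * enorm (x' - x).
  by apply: lipg; apply/ltW/(le_lt_trans dxP).
have dgP : enormp (x' - x, g x' - g x) <= (1 + L) * P.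
  by apply: le_trans (enormp_le_add _ _) _; nra.
have dzP : enorm ((g x' - y') - (g x - y)) <= (1 + L) * P.
  have -> : (g x' - y') - (g x - y) = (g x' - g x) - (y' - y).
    by rewrite !opprB addrACA [RHS]addrACA (addrC (- g x)).
  apply: le_trans (enormD _ _) _; rewrite enormN; nra.
have := hd1 (x', g x') erefl; rewrite /= => /(_ (le_lt_trans dgP _)) hgr.
have := hd2 _ Dz' (le_lt_trans dzP _) => hDz.
rewrite dotp_gphPhi; move: hgr hDz; rewrite /dotp /=.
have -> : eps = e * (2 * (1 + L)) by rewrite divfK // gt_eqF // pmulr_rgt0 // ltr_wpDr.
nra.
Qed.

End CoderivativePhi.

Section Proposition.
Variables (R : realType) (n m : nat).
Variables (g : 'rV[R]_n -> 'rV[R]_m) (D : 'rV[R]_m -> Prop).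
Variables (xb u : 'rV[R]_n) (e : 'I_m -> 'rV[R]_m).

Lemma calm_dir_quotient_cluster (xk : nat -> 'rV[R]_n) :
  enorm u = 1 -> calm_dir g xb u -> (forall k, xk k != xb) -> cvgv xk xb ->
  cvgv (fun k => (enorm (xk k - xb))^-1 *: (xk k - xb)) u ->
  exists p v, (forall k, (k <= p k)%N) /\
    cvgv (fun k => (enorm (xk (p k) - xb))^-1 *: (g (xk (p k)) - g xb)) v.
Proof.
move=> u1 [r [d [L [r0 [d0 [_ calmg]]]]]] xk_ne cx cdir.
pose t k := enorm (xk k - xb).
have t0 k : 0 < t k by apply/enorm_gt0; rewrite subr_eq0.
have [N1 xk_r] := cx r r0; have [N2 xk_d] := cdir d d0.
have bounded k : (maxn N1 N2 <= k)%N -> enorm ((t k)^-1 *: (g (xk k) - g xb)) <= L.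
  rewrite geq_max => /andP [k1 k2].
  rewrite enormZ ger0_norm ?invr_ge0 ?(ltW (t0 k)) // ler_pdivrMl // mulrC.
  apply: calmg; split; last exact/ltW/xk_r.
  rewrite u1 mulr1 scale1r -/(t k).
  have -> : t k *: u - (xk k - xb) = t k *: (u - (t k)^-1 *: (xk k - xb)).
    by rewrite scalerBr scalerKV ?gt_eqF.
  rewrite enormZ ger0_norm ?(ltW (t0 k)) // mulrC enorm_distC.
  by apply: ler_wpM2r; [exact: ltW | exact/ltW/xk_d].
have [p [hp [v cv]]] := bounded_cvgv_sub (fun k => bounded _ (leq_addl k (maxn N1 N2))).
exists (fun k => (p k + maxn N1 N2)%N), v; split => // k.
exact: leq_trans (hp k) (leq_addr _ _).
Qed.

Lemma condN_quasi_normal_dir : econt g -> enorm u = 1 -> calm_dir g xb u ->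
  condN g D xb u e -> quasi_normal_dir (gphPhi g D) xb u e.
Proof.
move=> gc u1 gcalm notN [lam [lam0 [_ [xk [yk [lamk [etak
  [Gk [xk_ne [cx [cy [clam [ceta [cdir [cyt Hk]]]]]]]]]]]]]]].
apply: notN.
have [p [v [hp cq]]] := calm_dir_quotient_cluster u1 gcalm xk_ne cx cdir.
pose T k := enorm (xk (p k) - xb).
have T0 k : 0 < T k by apply/enorm_gt0; rewrite subr_eq0.
pose Z k := g (xk (p k)) - yk (p k).
have cT : cvgR T 0 := cvgv_dist (cvgv_sub hp cx).
have cZ : cvgv (fun k => (T k)^-1 *: (Z k - g xb)) v.
  apply: (eq_cvgv (s := fun k => (T k)^-1 *: (g (xk (p k)) - g xb) - (T k)^-1 *: yk (p k))).
    by move=> k; rewrite -scalerBr addrAC.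
  by rewrite -[v]subr0; apply: cvgvB cq (cvgv_sub hp cyt).
have cl := cvgv_sub hp clam; have ce := cvgv_sub hp ceta; have cd := cvgv_sub hp cdir.
have nD k : rnormal D (Z k) (lamk (p k)) := rcoderS_gphPhi_rnormal (Hk (p k)).1.
have ng k : rcoderf g (xk (p k)) (lamk (p k)) (etak (p k)).
  exact: rcoderS_gphPhi_rcoderf (Hk (p k)).1.
exists v, lam; split => //; split; first exact: dnormal_seq T0 cT cZ cl nD.
split; first exact: (dcoderS_seq (G := gphf g) T0 cT cd cq cl ce ng).
have cX := cvgv_sub hp cx.
have cZg : cvgv Z (g xb).
  by rewrite -[g xb]subr0; apply: cvgvB (econt_cvgv gc cX) (cvgv_sub hp cy).
exists (fun k => xk (p k)), Z, (fun k => lamk (p k)), (fun k => etak (p k)).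
repeat split => //.
- by move=> k; apply: Gk.
- by rewrite /Z subKr; apply: (Hk (p k)).2.
Qed.

Lemma quasi_normal_dir_condN : econt g ->
  (exists r : R, 0 < r /\ forall x, enorm (x - xb) < r -> calm_at g x) ->
  quasi_normal_dir (gphPhi g D) xb u e -> condN g D xb u e.
Proof.
move=> gc [r [r0 calmg]] notQN [v [lam [lam0 [_ [_ [xk [zk [lamk [etak
  [xk_ne [Dz [cx [cz [clam [ceta [cdir [czt [cq Hk]]]]]]]]]]]]]]]]]].
apply: notQN.
have [N xk_r] := cx r r0.
pose p k := (k + N)%N.
have hp k : (k <= p k)%N by apply: leq_addr.
pose T k := enorm (xk (p k) - xb).
have T0 k : 0 < T k by apply/enorm_gt0; rewrite subr_eq0.
pose Y k := g (xk (p k)) - zk (p k).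
have cYT : cvgv (fun k => (T k)^-1 *: Y k) 0.
  apply: (eq_cvgv (s := fun k => (T k)^-1 *: (g (xk (p k)) - g xb) - (T k)^-1 *: (zk (p k) - g xb))).
    by move=> k; rewrite -scalerBr opprB addrA subrK.
  by rewrite -(subrr v); apply: cvgvB (cvgv_sub hp cq) (cvgv_sub hp czt).
have nPhi k : rcoderS (gphPhi g D) (xk (p k)) (Y k) (lamk (p k)) (etak (p k)).
  have [ng [nD _]] := Hk (p k).
  by apply: rcoderS_gphPhi_of_calm; [apply/calmg/xk_r/leq_addl | | rewrite /Y subKr].
have cX := cvgv_sub hp cx.
have cl := cvgv_sub hp clam; have ce := cvgv_sub hp ceta; have cd := cvgv_sub hp cdir.
exists lam; split => //; split.
  apply: (dcoderS_seq T0 (cvgv_dist cX) cd _ cl ce nPhi).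
  by apply: eq_cvgv cYT => k; rewrite subr0.
have cYg : cvgv Y 0.
  by rewrite -(subrr (g xb)); apply: cvgvB (econt_cvgv gc cX) (cvgv_sub hp cz).
exists (fun k => xk (p k)), Y, (fun k => lamk (p k)), (fun k => etak (p k)).
repeat split => //.
- by move=> k; rewrite /gphPhi /Y /= subKr.
- exact: (Hk (p k)).2.2.
Qed.

End Proposition.

Theorem proposition5p13 (R : realType) (n m : nat)
    (g : 'rV[R]_n -> 'rV[R]_m) (D : 'rV[R]_m -> Prop) (xb u : 'rV[R]_n)
    (e : 'I_m -> 'rV[R]_m) :
  econt g -> eclosed D -> D (g xb) -> enorm u = 1 -> calm_dir g xb u ->
  orthonormal_basis e ->
  (condN g D xb u e -> quasi_normal_dir (gphPhi g D) xb u e) /\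
  ((exists r : R, 0 < r /\ forall x, enorm (x - xb) < r -> calm_at g x) ->
   (condN g D xb u e <-> quasi_normal_dir (gphPhi g D) xb u e)).
Proof.
move=> gc _ _ u1 gcalm _.
have N_QN := condN_quasi_normal_dir (D := D) (e := e) gc u1 gcalm.
by split=> // calm_near; split=> //; apply: quasi_normal_dir_condN.
Qed.
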